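(* Let $\{G_\alpha\}_{\alpha\in\Lambda}$ be a family of partially ordered abelian groups, $G=\bigoplus_\alpha G_\alpha$ with the product order, $\{n_\alpha\}_{\alpha\in\Lambda}$ nonnegative integers with $N=\sup_\alpha n_\alpha<\infty$. Then: (i) if each $G_\alpha$ is $n_\alpha$-atomic, then $G$ is $N$-atomic; (ii) if each $G_\alpha$ is $n_\alpha$-antimatter, then $G$ is $N$-antimatter.
   Context: A po-group is an abelian group with a translation-invariant partial order; $G^+=\{g:0\le g\}$; product order on a direct sum is componentwise. An atom is a minimal element of $G^+\setminus\{0\}$; $A(G)$ is the subgroup generated by atoms; $Q(G)$ is the subgroup generated by $\{g\in G^+:\exists h\in G^+,\ g+h\in A(G)\}$ (a convex subgroup, so $G/Q(G)$ is a po-group under the induced order $a+Q\le b+Q$ iff $\alpha\le\beta$ for some representatives). Quasi-atomic quotient sequence: $G_0=G$, $G_{n+1}=G_n/Q(G_n)$. $G$ is $n$-atomic if $n$ is the least nonnegative integer with $G_m=0$ for all $m\ge n$. $G$ is $n$-antimatter if $n$ is the least nonnegative integer such that $G_n\ne0$ and $Q(G_n)=0$ (equivalently $G_m=G_n$ for all $m\ge n$). *)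

From Stdlib Require Import List Arith ClassicalEpsilon.
Import ListNotations.

(** A po-group presented as raw data; the axioms are the separate predicate
    [is_pogroup]. *)
Record poGroup := PoGroup {
  car  : Type;
  zero : car;
  add  : car -> car -> car;
  opp  : car -> car;
  le   : car -> car -> Prop
}.

Arguments zero {p}.
Arguments add {p} _ _.
Arguments opp {p} _.
Arguments le {p} _ _.

Definition is_pogroup (G : poGroup) : Prop :=
  (forall x y z : car G, add x (add y z) = add (add x y) z) /\
  (forall x y : car G, add x y = add y x) /\
  (forall x : car G, add zero x = x) /\
  (forall x : car G, add (opp x) x = zero) /\
  (forall x : car G, le x x) /\
  (forall x y : car G, le x y -> le y x -> x = y) /\
  (forall x y z : car G, le x y -> le y z -> le x z) /\
  (forall x y z : car G, le x y -> le (add x z) (add y z)).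

Section PoGroupNotions.
Variable G : poGroup.

Definition pos (g : car G) : Prop := le zero g.

Definition atom (a : car G) : Prop :=
  pos a /\ a <> zero /\
  (forall b, pos b -> b <> zero -> le b a -> b = a).

Inductive gen (S : car G -> Prop) : car G -> Prop :=
| gen_base : forall x, S x -> gen S x
| gen_zero : gen S zero
| gen_add  : forall x y, gen S x -> gen S y -> gen S (add x y)
| gen_opp  : forall x, gen S x -> gen S (opp x).

Definition Asub : car G -> Prop := gen atom.

Definition Qsub : car G -> Prop :=
  gen (fun g => pos g /\ exists h, pos h /\ Asub (add g h)).

Definition trivial : Prop := forall x : car G, x = zero.

Definition zero_sub (H : car G -> Prop) : Prop := forall x, H x -> x = zero.

End PoGroupNotions.

Arguments pos {G} _.
Arguments atom {G} _.
Arguments Asub {G} _.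
Arguments Qsub {G} _.

(** Quotient G/H: its elements are the cosets x + H, as subsets of G. *)
Section Quotient.
Variables (G : poGroup) (H : car G -> Prop).

Definition coset (a : car G) : car G -> Prop := fun x => H (add x (opp a)).

Definition qcar : Type := { P : car G -> Prop | exists a, P = coset a }.

Definition qmk (a : car G) : qcar := exist _ (coset a) (ex_intro _ a eq_refl).

Definition qrep (P : qcar) : car G :=
  proj1_sig (constructive_indefinite_description _ (proj2_sig P)).

Definition qle (P R : qcar) : Prop :=
  exists alpha beta, proj1_sig P alpha /\ proj1_sig R beta /\ le alpha beta.

Definition quot : poGroup :=
  {| car := qcar;
     zero := qmk zero;
     add := fun P R => qmk (add (qrep P) (qrep R));
     opp := fun P => qmk (opp (qrep P));
     le := qle |}.
End Quotient.

Fixpoint qseq (G : poGroup) (n : nat) : poGroup :=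
  match n with
  | O => G
  | S m => quot (qseq G m) (@Qsub (qseq G m))
  end.

Definition n_atomic (G : poGroup) (n : nat) : Prop :=
  (forall m, n <= m -> trivial (qseq G m)) /\
  (forall k, (forall m, k <= m -> trivial (qseq G m)) -> n <= k).

Definition n_antimatter (G : poGroup) (n : nat) : Prop :=
  (~ trivial (qseq G n) /\ zero_sub (qseq G n) (@Qsub (qseq G n))) /\
  (forall k, ~ trivial (qseq G k) /\ zero_sub (qseq G k) (@Qsub (qseq G k)) ->
             n <= k).

Section DirectSum.
Variables (I : Type) (G : I -> poGroup) (HG : forall i, is_pogroup (G i)).

Definition finsupp (f : forall i, car (G i)) : Prop :=
  exists l : list I, forall i, ~ In i l -> f i = zero.

Definition dcar : Type := { f : forall i, car (G i) | finsupp f }.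

Lemma add_zero_zero i : add (zero : car (G i)) zero = zero.
Proof. destruct (HG i) as (_ & _ & H0 & _). apply H0. Qed.

Lemma opp_zero i : opp (zero : car (G i)) = zero.
Proof.
  destruct (HG i) as (_ & Hc & H0 & Hi & _).
  rewrite <- (Hi zero) at 2. rewrite Hc, H0. reflexivity.
Qed.

Definition dzero : dcar :=
  exist _ (fun i => zero) (ex_intro _ nil (fun i _ => eq_refl)).

Lemma finsupp_add (f g : dcar) :
  finsupp (fun i => add (proj1_sig f i) (proj1_sig g i)).
Proof.
  destruct f as [f [l1 H1]], g as [g [l2 H2]]; simpl.
  exists (l1 ++ l2). intros i Hi.
  rewrite H1, H2; [apply add_zero_zero | |];
    intro; apply Hi, in_or_app; auto.
Qed.

Lemma finsupp_opp (f : dcar) : finsupp (fun i => opp (proj1_sig f i)).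
Proof.
  destruct f as [f [l H]]; simpl. exists l. intros i Hi.
  rewrite H by exact Hi. apply opp_zero.
Qed.

Definition dsum : poGroup :=
  {| car := dcar;
     zero := dzero;
     add := fun f g => exist _ _ (finsupp_add f g);
     opp := fun f => exist _ _ (finsupp_opp f);
     le := fun f g => forall i, le (proj1_sig f i) (proj1_sig g i) |}.
End DirectSum.

Definition is_sup {I : Type} (n : I -> nat) (N : nat) : Prop :=
  (forall i, n i <= N) /\ (forall M, (forall i, n i <= M) -> N <= M).

(** Let [D] be a po-group that decomposes as the direct sum of a family
    [G i], i.e. there is a coordinate map [phi] that is an additive bijection
    onto the finitely supported families and reflects the order
    componentwise ([DirectDecomp]).  The key facts are:
    - the atoms of [D] are exactly the elements concentrated in one
      coordinate with an atom there, hence [A(D)] and then [Q(D)] are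
      computed componentwise ([decomp_Asub], [decomp_Qsub]);
    - [Q(H)] is a convex subgroup of any po-group [H] ([Qsub_convex]), so
      [H/Q(H)] is again a po-group, and the decomposition of [D] descends
      to one of [D/Q(D)] into the [G i/Q(G i)] ([decomp_quot]).
    By induction every stage of the quasi-atomic quotient sequence of
    [dsum G] decomposes into the corresponding stages of the [G i]
    ([decomp_qseq]), so "the m-th stage is 0" and "Q of the m-th stage is 0"
    hold for the sum iff they hold for every summand.  Both conditions
    persist along the sequence ([trivial_qseq_mono], [stable_stage_mono]),
    and Corollary 4.9 follows by comparing least indices with the
    supremum [N]. *)

From Stdlib Require Import List Arith ClassicalEpsilon.
From Stdlib Require Import Classical ProofIrrelevance FunctionalExtensionality PropExtensionality.
From Stdlib Require Import ssreflect.

Existing Class is_pogroup.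

Section PoGroupLaws.
Context {G : poGroup} {HG : is_pogroup G}.
Implicit Types x y z a b c d : car G.

Lemma addA x y z : add x (add y z) = add (add x y) z.
Proof. case: HG => h _; exact: h. Qed.
Lemma addC x y : add x y = add y x.
Proof. case: HG => _ [h _]; exact: h. Qed.
Lemma add0l x : add zero x = x.
Proof. case: HG => _ [_ [h _]]; exact: h. Qed.
Lemma addNl x : add (opp x) x = zero.
Proof. case: HG => _ [_ [_ [h _]]]; exact: h. Qed.
Lemma le_refl x : le x x.
Proof. case: HG => _ [_ [_ [_ [h _]]]]; exact: h. Qed.
Lemma le_anti x y : le x y -> le y x -> x = y.
Proof. case: HG => _ [_ [_ [_ [_ [h _]]]]]; exact: h. Qed.
Lemma le_trans x y z : le x y -> le y z -> le x z.
Proof. case: HG => _ [_ [_ [_ [_ [_ [h _]]]]]]; exact: h. Qed.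
Lemma le_add x y z : le x y -> le (add x z) (add y z).
Proof. case: HG => _ [_ [_ [_ [_ [_ [_ h]]]]]]; exact: h. Qed.

Lemma add0r x : add x zero = x.
Proof. by rewrite addC add0l. Qed.
Lemma addNr x : add x (opp x) = zero.
Proof. by rewrite addC addNl. Qed.
Lemma addK x y : add (add x y) (opp y) = x.
Proof. by rewrite -addA addNr add0r. Qed.
Lemma subrK x y : add (add x (opp y)) y = x.
Proof. by rewrite -addA addNl add0r. Qed.
Lemma addKl x y : add (opp x) (add x y) = y.
Proof. by rewrite addA addNl add0l. Qed.
Lemma add_cancel x y z : add x z = add y z -> x = y.
Proof. by move=> E; rewrite -(addK x z) E addK. Qed.
Lemma opp_unique x y : add x y = zero -> y = opp x.
Proof. by move=> E; apply: (add_cancel _ _ x); rewrite addC E addNl. Qed.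
Lemma opp_opp x : opp (opp x) = x.
Proof. by symmetry; apply: opp_unique; apply: addNl. Qed.
Lemma opp0 : opp (zero : car G) = zero.
Proof. by symmetry; apply: opp_unique; apply: add0l. Qed.
Lemma addCA x y z : add x (add y z) = add y (add x z).
Proof. by rewrite !addA (addC x y). Qed.
Lemma addACA a b c d : add (add a b) (add c d) = add (add a c) (add b d).
Proof. by rewrite -!addA (addCA b c d). Qed.
Lemma opp_add x y : opp (add x y) = add (opp x) (opp y).
Proof. by symmetry; apply: opp_unique; rewrite addACA !addNr add0l. Qed.
Lemma sub_eq0 x y : add x (opp y) = zero -> x = y.
Proof. by move=> E; apply: (add_cancel _ _ (opp y)); rewrite E addNr. Qed.
Lemma sub_tele x y z : add (add x (opp y)) (add y (opp z)) = add x (opp z).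
Proof. by rewrite -addA addKl. Qed.
Lemma sub_addD a b c d :
  add (add a b) (opp (add c d)) = add (add a (opp c)) (add b (opp d)).
Proof. by rewrite opp_add addACA. Qed.
Lemma opp_sub x y : opp (add x (opp y)) = add y (opp x).
Proof. by rewrite opp_add opp_opp addC. Qed.

Lemma pos0 : pos (zero : car G).
Proof. exact: le_refl. Qed.
Lemma pos_add x y : pos x -> pos y -> pos (add x y).
Proof.
  move=> px py; apply: (le_trans _ y) => //.
  by rewrite -{1}(add0l y); apply: le_add.
Qed.
Lemma le_pos x y : le x y -> pos (add y (opp x)).
Proof. by move=> h; rewrite /pos -(addNr x); apply: le_add. Qed.
Lemma pos_le x y : pos (add y (opp x)) -> le x y.
Proof. by move=> /(le_add _ _ x); rewrite add0l subrK. Qed.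
Lemma le_add_pos x y : pos y -> le x (add x y).
Proof. by move=> py; apply: pos_le; rewrite addC addKl. Qed.
Lemma le_sub_pos x y : pos y -> le (add x (opp y)) x.
Proof. by move=> py; apply: pos_le; rewrite opp_sub addCA addNr add0r. Qed.
End PoGroupLaws.

Section Congruence.
Context {G : poGroup} {HG : is_pogroup G}.
Variable S : car G -> Prop.
Implicit Types x y z a b c d : car G.

Lemma gen_refl x : gen G S (add x (opp x)).
Proof. rewrite addNr; exact: gen_zero. Qed.
Lemma gen_sym x y : gen G S (add x (opp y)) -> gen G S (add y (opp x)).
Proof. by move=> h; rewrite -opp_sub; apply: gen_opp. Qed.
Lemma gen_trans x y z :
  gen G S (add x (opp y)) -> gen G S (add y (opp z)) -> gen G S (add x (opp z)).
Proof. by move=> h1 h2; rewrite -(sub_tele x y z); apply: gen_add. Qed.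
Lemma gen_addc a b c d :
  gen G S (add a (opp c)) -> gen G S (add b (opp d)) ->
  gen G S (add (add a b) (opp (add c d))).
Proof. by move=> h1 h2; rewrite sub_addD; apply: gen_add. Qed.
Lemma gen_oppc a c :
  gen G S (add a (opp c)) -> gen G S (add (opp a) (opp (opp c))).
Proof. by move=> h; rewrite -opp_add; apply: gen_opp. Qed.
End Congruence.

Section Quotient.
Context {G : poGroup} {HG : is_pogroup G}.
Variable S : car G -> Prop.
Local Notation H := (gen G S).
Local Notation QG := (quot G (gen G S)).
Local Notation mk := (qmk G (gen G S)).
Local Notation rep := (qrep G (gen G S)).

Lemma qcar_eq (P R : qcar G H) : proj1_sig P = proj1_sig R -> P = R.
Proof.
  case: P R => [P hP] [R hR] /= E; subst R.
  by f_equal; apply: proof_irrelevance.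
Qed.

Lemma qmk_rep (P : qcar G H) : P = mk (rep P).
Proof.
  apply: qcar_eq; rewrite /qrep /=.
  by case: (constructive_indefinite_description _ _).
Qed.

Lemma qmk_eq a b : mk a = mk b <-> H (add a (opp b)).
Proof.
  split=> [E | h].
  - have Ecoset : coset G H a = coset G H b := f_equal (@proj1_sig _ _) E.
    have : coset G H a a by apply: gen_refl.
    by rewrite Ecoset.
  - apply: qcar_eq; apply: functional_extensionality => x /=.
    apply: propositional_extensionality; rewrite /coset.
    split=> hx; first exact: gen_trans hx h.
    by apply: (gen_trans _ _ _ _ hx); apply: gen_sym.
Qed.

Lemma qrep_qmk a : H (add (rep (mk a)) (opp a)).
Proof. by apply/qmk_eq; rewrite -qmk_rep. Qed.

Lemma quot_ind (Pr : car QG -> Prop) : (forall a, Pr (mk a)) -> forall P, Pr P.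
Proof. by move=> h P; rewrite (qmk_rep P). Qed.

Lemma qmk_surj (P : car QG) : exists a, P = mk a.
Proof. by exists (rep P); apply: qmk_rep. Qed.

Lemma qadd_mk a b : @add QG (mk a) (mk b) = mk (add a b).
Proof. by apply/qmk_eq; apply: gen_addc; apply: qrep_qmk. Qed.

Lemma qopp_mk a : @opp QG (mk a) = mk (opp a).
Proof. by apply/qmk_eq; apply: gen_oppc; apply: qrep_qmk. Qed.

Lemma qle_mk_intro a b : le a b -> @le QG (mk a) (mk b).
Proof. by move=> h; exists a, b; split; [|split]; rewrite //=; apply: gen_refl. Qed.

Lemma qle_mk a b :
  @le QG (mk a) (mk b) <-> exists c, pos c /\ H (add (add b (opp a)) (opp c)).
Proof.
  split.
  - move=> [al [be [/= ha [/= hb hab]]]].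
    exists (add be (opp al)); split; first exact: le_pos.
    by apply: gen_addc; [| apply: gen_oppc]; apply: gen_sym.
  - move=> [c [pc hc]]; exists a, (add a c); split; [|split] => /=.
    + exact: gen_refl.
    + rewrite /coset; have -> : add (add a c) (opp b) = opp (add (add b (opp a)) (opp c)).
      { by rewrite opp_sub opp_sub addCA addA. }
      exact: gen_opp.
    + exact: le_add_pos.
Qed.

Lemma qle_anti (Hconv : forall g h, pos g -> pos h -> H (add g h) -> H g) a b :
  @le QG (mk a) (mk b) -> @le QG (mk b) (mk a) -> mk a = mk b.
Proof.
  move=> /qle_mk [c [pc hc]] /qle_mk [c' [pc' hc']].
  have hcc' : H (add c c').
  { have := gen_add _ _ _ _ hc hc'.
    rewrite -sub_addD sub_tele addNr add0l => /gen_opp; by rewrite opp_opp. }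
  have hba : H (add b (opp a)).
  { rewrite -(subrK (add b (opp a)) c).
    by apply: gen_add => //; apply: (Hconv c c'). }
  by apply/qmk_eq; apply: gen_sym.
Qed.

Lemma qle_trans a b d :
  @le QG (mk a) (mk b) -> @le QG (mk b) (mk d) -> @le QG (mk a) (mk d).
Proof.
  move=> /qle_mk [c [pc hc]] /qle_mk [c' [pc' hc']].
  apply/qle_mk; exists (add c' c); split; first exact: pos_add.
  by rewrite -(sub_tele d b a) sub_addD; apply: gen_add.
Qed.

Lemma qle_add a b z :
  @le QG (mk a) (mk b) -> @le QG (mk (add a z)) (mk (add b z)).
Proof.
  move=> /qle_mk [c [pc hc]]; apply/qle_mk; exists c; split => //.
  by rewrite sub_addD addNr add0r.
Qed.

Lemma quot_pogroup :
  (forall g h, pos g -> pos h -> H (add g h) -> H g) -> is_pogroup QG.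
Proof.
  move=> Hconv; repeat split.
  - elim/quot_ind => a; elim/quot_ind => b; elim/quot_ind => c.
    by rewrite !qadd_mk addA.
  - elim/quot_ind => a; elim/quot_ind => b; by rewrite !qadd_mk addC.
  - elim/quot_ind => a; change (@add QG (mk zero) (mk a) = mk a).
    by rewrite qadd_mk add0l.
  - elim/quot_ind => a; by rewrite qopp_mk qadd_mk addNl.
  - elim/quot_ind => a; apply: qle_mk_intro; exact: le_refl.
  - elim/quot_ind => a; elim/quot_ind => b; exact: qle_anti.
  - elim/quot_ind => a; elim/quot_ind => b; elim/quot_ind => c; exact: qle_trans.
  - elim/quot_ind => a; elim/quot_ind => b; elim/quot_ind => c.
    rewrite !qadd_mk; exact: qle_add.
Qed.
End Quotient.

Section QuasiAtomic.
Context {G : poGroup} {HG : is_pogroup G}.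
Implicit Types g h s : car G.

Definition Qgen (g : car G) : Prop := pos g /\ exists h, pos h /\ Asub (add g h).

Lemma Qgen0 : Qgen zero.
Proof.
  split; first exact: pos0.
  by exists zero; split; [exact: pos0 | rewrite add0l; apply: gen_zero].
Qed.

Lemma Qgen_add g s : Qgen g -> Qgen s -> Qgen (add g s).
Proof.
  move=> [pg [h1 [ph1 a1]]] [ps [h2 [ph2 a2]]]; split; first exact: pos_add.
  exists (add h1 h2); split; first exact: pos_add.
  by rewrite addACA; apply: gen_add.
Qed.

Lemma Qgen_down g s : pos g -> le g s -> Qgen s -> Qgen g.
Proof.
  move=> pg gs [ps [h [ph a]]]; split => //.
  exists (add (add s (opp g)) h); split; first by apply: pos_add => //; apply: le_pos.
  by rewrite addA addCA addNr add0r.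
Qed.

Lemma Qsub_diff x : Qsub x -> exists s1 s2, Qgen s1 /\ Qgen s2 /\ x = add s1 (opp s2).
Proof.
  elim.
  - move=> y hy; exists y, zero; split; [|split] => //; first exact: Qgen0.
    by rewrite opp0 add0r.
  - by exists zero, zero; split; [|split]; rewrite ?addNr //; apply: Qgen0.
  - move=> y z _ [a1 [a2 [h1 [h2 ->]]]] _ [b1 [b2 [k1 [k2 ->]]]].
    exists (add a1 b1), (add a2 b2); split; [|split]; try exact: Qgen_add.
    by rewrite sub_addD.
  - move=> y _ [a1 [a2 [h1 [h2 ->]]]]; exists a2, a1; split; [|split] => //.
    by rewrite opp_sub.
Qed.

Lemma Qsub_convex g h : pos g -> pos h -> Qsub (add g h) -> Qsub g.
Proof.
  move=> pg ph /Qsub_diff [s1 [s2 [h1 [[ps2 _] e]]]].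
  apply: gen_base; apply: (Qgen_down g s1) => //.
  apply: (le_trans _ (add g h)); first exact: le_add_pos.
  by rewrite e; apply: le_sub_pos.
Qed.

Lemma Qquot_pogroup : is_pogroup (quot G (@Qsub G)).
Proof. exact: (@quot_pogroup G HG Qgen Qsub_convex). Qed.
End QuasiAtomic.

Lemma qseq_pogroup (G : poGroup) (HG : is_pogroup G) m : is_pogroup (qseq G m).
Proof. by elim: m => [|m IH] //=; apply: (@Qquot_pogroup _ IH). Qed.

Record DirectDecomp {D : poGroup} {I : Type} {G : I -> poGroup}
    (phi : car D -> forall i, car (G i)) : Prop := {
  dec_add : forall x y i, phi (add x y) i = add (phi x i) (phi y i);
  dec_inj : forall x y, (forall i, phi x i = phi y i) -> x = y;
  dec_fin : forall x, exists l, forall i, ~ In i l -> phi x i = zero;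
  dec_surj : forall f : (forall i, car (G i)),
      (exists l, forall i, ~ In i l -> f i = zero) -> exists x, forall i, phi x i = f i;
  dec_le : forall x y, le x y <-> forall i, le (phi x i) (phi y i) }.

Section Decomposition.
Context {D : poGroup} {HD : is_pogroup D} {I : Type} {G : I -> poGroup}
        {HG : forall i, is_pogroup (G i)}.
Variable phi : car D -> forall i, car (G i).
Hypothesis Hd : DirectDecomp phi.

Lemma dec_zero i : phi zero i = zero.
Proof. by apply: (add_cancel _ _ (phi zero i)); rewrite -(dec_add _ Hd) !add0l. Qed.

Lemma dec_opp x i : phi (opp x) i = opp (phi x i).
Proof. by apply: opp_unique; rewrite -(dec_add _ Hd) addNr dec_zero. Qed.

Lemma dec_sub x y i : phi (add x (opp y)) i = add (phi x i) (opp (phi y i)).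
Proof. by rewrite (dec_add _ Hd) dec_opp. Qed.

Lemma dec_pos x : pos x <-> forall i, pos (phi x i).
Proof. by rewrite /pos (dec_le _ Hd); split=> h i; move: (h i); rewrite dec_zero. Qed.

Lemma dec_eq0 x : (forall i, phi x i = zero) -> x = zero.
Proof. by move=> h; apply: (dec_inj _ Hd) => i; rewrite h dec_zero. Qed.

Definition concentrated (x : car D) (i : I) (y : car (G i)) : Prop :=
  phi x i = y /\ forall j, j <> i -> phi x j = zero.

Lemma concentrated_ex i (y : car (G i)) : exists x, concentrated x i y.
Proof.
  pose f j : car (G j) := match excluded_middle_informative (i = j) with
                          | left e => eq_rect i (fun k => car (G k)) y j e
                          | right _ => zero end.
  have [x hx] : exists x, forall j, phi x j = f j.
  { apply: (dec_surj _ Hd); exists (i :: nil) => j hj; rewrite /f.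
    by case: excluded_middle_informative => // e; case: hj; left. }
  exists x; split=> [|j ne]; rewrite hx /f; case: excluded_middle_informative => //.
  - by move=> e; rewrite (proof_irrelevance _ e eq_refl).
  - by move=> e; case: ne.
Qed.

Lemma concentrated_eq x x' i y :
  concentrated x i y -> concentrated x' i y -> x = x'.
Proof.
  move=> [h1 h2] [k1 k2]; apply: (dec_inj _ Hd) => j.
  by case: (classic (j = i)) => [->|ne]; [rewrite h1 k1 | rewrite h2 // k2].
Qed.

Lemma concentrated_add x x' i y y' :
  concentrated x i y -> concentrated x' i y' -> concentrated (add x x') i (add y y').
Proof.
  move=> [h1 h2] [k1 k2]; split; first by rewrite (dec_add _ Hd) h1 k1.
  by move=> j ne; rewrite (dec_add _ Hd) h2 // k2 // add0l.
Qed.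

Lemma concentrated_opp x i y : concentrated x i y -> concentrated (opp x) i (opp y).
Proof.
  move=> [h1 h2]; split; first by rewrite dec_opp h1.
  by move=> j ne; rewrite dec_opp h2 // opp0.
Qed.

Lemma concentrated_pos x i y : concentrated x i y -> pos y -> pos x.
Proof.
  move=> [h1 h2] py; apply/dec_pos => j.
  by case: (classic (j = i)) => [->|ne]; [rewrite h1 | rewrite h2 //; apply: pos0].
Qed.

Lemma concentrated_gen (SD : car D -> Prop) i (SG : car (G i) -> Prop) :
  (forall y x, SG y -> concentrated x i y -> gen D SD x) ->
  forall y, gen (G i) SG y -> forall x, concentrated x i y -> gen D SD x.
Proof.
  move=> hbase y0; elim.
  - by move=> y hy x; apply: hbase.
  - move=> x [hxi hxj]; rewrite (dec_eq0 x); last exact: gen_zero.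
    by move=> j; case: (classic (j = i)) => [->|ne]; auto.
  - move=> y1 y2 _ IH1 _ IH2 x hx.
    have [s1 hs1] := concentrated_ex i y1; have [s2 hs2] := concentrated_ex i y2.
    rewrite (concentrated_eq _ _ _ _ hx (concentrated_add _ _ _ _ _ hs1 hs2)).
    by apply: gen_add; auto.
  - move=> y _ IH x hx; have [s hs] := concentrated_ex i y.
    rewrite (concentrated_eq _ _ _ _ hx (concentrated_opp _ _ _ hs)).
    by apply: gen_opp; auto.
Qed.

Lemma gen_coords (SD : car D -> Prop) (SG : forall i, car (G i) -> Prop) :
  (forall x, SD x -> forall i, gen (G i) (SG i) (phi x i)) ->
  forall x, gen D SD x -> forall i, gen (G i) (SG i) (phi x i).
Proof.
  move=> hbase x0; elim => //.
  - by move=> i; rewrite dec_zero; apply: gen_zero.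
  - by move=> x y _ IH1 _ IH2 i; rewrite (dec_add _ Hd); apply: gen_add.
  - by move=> x _ IH i; rewrite dec_opp; apply: gen_opp.
Qed.

(** Conversely, an element whose coordinates lie in [gen (SG i)] is in
    [gen SD]: peel off its finitely many nonzero coordinates one by one. *)
Lemma coords_gen (SD : car D -> Prop) (SG : forall i, car (G i) -> Prop) :
  (forall i y x, SG i y -> concentrated x i y -> gen D SD x) ->
  forall x, (forall i, gen (G i) (SG i) (phi x i)) -> gen D SD x.
Proof.
  move=> hbase x hx; have [l hl] := dec_fin _ Hd x.
  elim: l x hx hl => [|a l IH] x hx hl.
  - by rewrite (dec_eq0 x) => [i|]; [apply: hl | apply: gen_zero].
  - have [s [hsa hs]] := concentrated_ex a (phi x a).
    rewrite -(subrK x s); apply: gen_add.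
    + apply: IH => i; rewrite dec_sub;
        case: (classic (i = a)) => [->|ne]; rewrite ?hsa ?addNr ?hs // ?opp0 ?add0r.
      * exact: gen_zero.
      * exact: hx.
      * by move=> ni; apply: hl => -[e | h]; [apply: ne | apply: ni].
    + apply: (concentrated_gen SD a (SG a) _ (phi x a) (hx a) s (conj hsa hs)).
      by move=> y z; apply: hbase.
Qed.

Lemma dec_atom a : atom a -> forall i, phi a i = zero \/ atom (phi a i).
Proof.
  move=> [pa [nza ma]] i; case: (classic (phi a i = zero)) => [|nz]; [by left | right].
  split; [exact: (proj1 (dec_pos a) pa) | split => // c pc nzc lc].
  have [t [hti htj]] := concentrated_ex i c.
  suff <- : t = a by [].
  apply: ma.
  - exact: (concentrated_pos t i c).
  - by move=> et; apply: nzc; rewrite -hti et dec_zero.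
  - apply/(dec_le _ Hd) => j; case: (classic (j = i)) => [->|ne]; first by rewrite hti.
    by rewrite htj //; apply: (proj1 (dec_pos a)).
Qed.

Lemma concentrated_atom x i y : atom y -> concentrated x i y -> atom x.
Proof.
  move=> [py [nzy my]] hs; split; [exact: (concentrated_pos _ _ _ hs) | split].
  - by move=> ex; apply: nzy; rewrite -(proj1 hs) ex dec_zero.
  - move=> b pb nzb lb.
    have pbj := proj1 (dec_pos b) pb; have lbj := proj1 (dec_le _ Hd b x) lb.
    have hj : forall j, j <> i -> phi b j = zero.
    { by move=> j ne; apply: le_anti (pbj j); move: (lbj j); rewrite (proj2 hs j ne). }
    have hi : phi b i = y.
    { apply: my => //; last by rewrite -(proj1 hs).
      by move=> e; apply: nzb; apply: dec_eq0 => j; case: (classic (j = i)) => [->|]; auto. }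
    exact: (concentrated_eq _ _ i y).
Qed.

Lemma decomp_Asub x : Asub x <-> forall i, Asub (phi x i).
Proof.
  split.
  - apply: (gen_coords atom (fun i => atom)) => a ha i.
    by case: (dec_atom a ha i) => [->|h]; [apply: gen_zero | apply: gen_base].
  - apply: (coords_gen atom (fun i => atom)) => i y z hy hz.
    by apply: gen_base; apply: (concentrated_atom z i y).
Qed.

Lemma decomp_Qsub x : Qsub x <-> forall i, Qsub (phi x i).
Proof.
  split.
  - apply: (gen_coords Qgen (fun i => Qgen)) => a [pa [h [ph ha]]] i.
    apply: gen_base; split; first exact: (proj1 (dec_pos a)).
    exists (phi h i); split; first exact: (proj1 (dec_pos h)).
    by rewrite -(dec_add _ Hd); apply: (proj1 (decomp_Asub _)).
  - apply: (coords_gen Qgen (fun i => Qgen)) => i y z [py [h [ph ha]]] hz.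
    have [sh hsh] := concentrated_ex i h.
    apply: gen_base; split; first exact: (concentrated_pos _ _ _ hz).
    exists sh; split; first exact: (concentrated_pos _ _ _ hsh).
    apply: (concentrated_gen atom i atom) ha _ (concentrated_add _ _ _ _ _ hz hsh).
    by move=> y' x' hy' hx'; apply: gen_base; apply: (concentrated_atom x' i y').
Qed.

Lemma decomp_trivial : trivial D <-> forall i, trivial (G i).
Proof.
  split=> [h i y | h x].
  - by have [x [<- _]] := concentrated_ex i y; rewrite (h x) dec_zero.
  - by apply: dec_eq0 => i; apply: h.
Qed.

Lemma decomp_zero_Qsub : zero_sub D (@Qsub D) <-> forall i, zero_sub (G i) (@Qsub (G i)).
Proof.
  split=> [h i y hy | h x hx].
  - have [x [hxi hxj]] := concentrated_ex i y.
    rewrite -hxi (h x) ?dec_zero //; apply: (proj2 (decomp_Qsub x)) => j.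
    by case: (classic (j = i)) => [->|ne]; [rewrite hxi | rewrite hxj //; apply: gen_zero].
  - by apply: dec_eq0 => i; apply: h; apply: (proj1 (decomp_Qsub x)).
Qed.
End Decomposition.

Lemma dependent_choice {I : Type} {T : I -> Type} (P : forall i, T i -> Prop) :
  (forall i, exists c, P i c) -> exists f : forall i, T i, forall i, P i (f i).
Proof.
  move=> h; exists (fun i => proj1_sig (constructive_indefinite_description _ (h i))).
  by move=> i; apply: proj2_sig.
Qed.

Section QuotientDecomposition.
Context {D : poGroup} {HD : is_pogroup D} {I : Type} {G : I -> poGroup}
        {HG : forall i, is_pogroup (G i)}.
Variable phi : car D -> forall i, car (G i).
Hypothesis Hd : DirectDecomp phi.

Local Notation QD := (quot D (@Qsub D)).
Local Notation QG i := (quot (G i) (@Qsub (G i))).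
Local Notation mkD := (qmk D (@Qsub D)).
Local Notation mkG i := (qmk (G i) (@Qsub (G i))).

Definition quot_coords (P : car QD) (i : I) : car (QG i) :=
  mkG i (phi (qrep D (@Qsub D) P) i).

Lemma coords_congr x y i : Qsub (add x (opp y)) -> Qsub (add (phi x i) (opp (phi y i))).
Proof. by move=> h; rewrite -(dec_sub _ Hd); apply: (proj1 (decomp_Qsub _ Hd _) h). Qed.

Lemma quot_coords_mk a i : quot_coords (mkD a) i = mkG i (phi a i).
Proof. by apply/(qmk_eq Qgen); apply: coords_congr; apply: (qrep_qmk Qgen). Qed.

Lemma quot_coords_add P R i :
  quot_coords (add P R) i = add (quot_coords P i) (quot_coords R i).
Proof.
  have [a ->] := qmk_surj Qgen P; have [b ->] := qmk_surj Qgen R.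
  by rewrite (qadd_mk Qgen) !quot_coords_mk (dec_add _ Hd) (qadd_mk Qgen).
Qed.

Lemma quot_coords_inj P R : (forall i, quot_coords P i = quot_coords R i) -> P = R.
Proof.
  have [a ->] := qmk_surj Qgen P; have [b ->] := qmk_surj Qgen R => h.
  apply/(qmk_eq Qgen); apply: (proj2 (decomp_Qsub _ Hd _)) => i.
  rewrite (dec_sub _ Hd); apply/(qmk_eq Qgen).
  by move: (h i); rewrite !quot_coords_mk.
Qed.

Lemma quot_coords_fin P : exists l, forall i, ~ In i l -> quot_coords P i = zero.
Proof.
  have [a ->] := qmk_surj Qgen P; have [l hl] := dec_fin _ Hd a.
  by exists l => i ni; rewrite quot_coords_mk hl.
Qed.

(** A finitely supported family of cosets has finitely supported
    representatives (pick [0] for the zero coset), which lift to [D]. *)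
Lemma quot_coords_surj (F : forall i, car (QG i)) :
  (exists l, forall i, ~ In i l -> F i = zero) ->
  exists P, forall i, quot_coords P i = F i.
Proof.
  move=> [l hl].
  have [f hf] : exists f : forall i, car (G i),
      forall i, mkG i (f i) = F i /\ (F i = zero -> f i = zero).
  { apply: (dependent_choice (fun i y => mkG i y = F i /\ (F i = zero -> y = zero))).
    move=> i; case: (classic (F i = zero)) => [e | ne].
    - by exists zero; rewrite e.
    - by exists (qrep _ _ (F i)); rewrite -(qmk_rep Qgen). }
  have [x hx] : exists x, forall i, phi x i = f i.
  { by apply: (dec_surj _ Hd); exists l => i ni; apply: (proj2 (hf i)); apply: hl. }
  by exists (mkD x) => i; rewrite quot_coords_mk hx; apply: (proj1 (hf i)).
Qed.

(** The order of [D/Q(D)] is the product order: positive representatives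
    of the coordinate differences, chosen [0] off the support, glue together. *)
Lemma quot_coords_le P R : le P R <-> forall i, le (quot_coords P i) (quot_coords R i).
Proof.
  have [a ->] := qmk_surj Qgen P; have [b ->] := qmk_surj Qgen R.
  split.
  - move=> /(qle_mk Qgen) [c [pc hc]] i; rewrite !quot_coords_mk.
    apply/(qle_mk Qgen); exists (phi c i); split; first exact: (proj1 (dec_pos _ Hd c)).
    by rewrite -!(dec_sub _ Hd); apply: (proj1 (decomp_Qsub _ Hd _)).
  - move=> h; have [l hl] := dec_fin _ Hd (add b (opp a)).
    have [c hc] : exists c : forall i, car (G i), forall i,
        pos (c i) /\ Qsub (add (phi (add b (opp a)) i) (opp (c i))) /\ (~ In i l -> c i = zero).
    { apply: (dependent_choice (fun i (y : car (G i)) => pos y /\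
          Qsub (add (phi (add b (opp a)) i) (opp y)) /\ (~ In i l -> y = zero))).
      move=> i; case: (classic (In i l)) => [il | nil].
      - move: (h i); rewrite !quot_coords_mk => /(qle_mk Qgen) [c [pc hc]].
        by exists c; rewrite (dec_sub _ Hd).
      - exists zero; split; [exact: pos0 | split => //].
        by rewrite hl // addNr; apply: gen_zero. }
    have [x hx] : exists x, forall i, phi x i = c i.
    { by apply: (dec_surj _ Hd); exists l => i ni; apply: (proj2 (proj2 (hc i))). }
    apply/(qle_mk Qgen); exists x; split.
    + by apply/(dec_pos _ Hd) => i; rewrite hx; apply: (proj1 (hc i)).
    + apply: (proj2 (decomp_Qsub _ Hd _)) => i.
      by rewrite (dec_sub _ Hd) hx; apply: (proj1 (proj2 (hc i))).
Qed.

Lemma decomp_quot : @DirectDecomp QD I (fun i => QG i) quot_coords.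
Proof.
  split.
  - exact: quot_coords_add.
  - exact: quot_coords_inj.
  - exact: quot_coords_fin.
  - exact: quot_coords_surj.
  - exact: quot_coords_le.
Qed.
End QuotientDecomposition.

Section DirectSumInstance.
Variables (I : Type) (G : I -> poGroup) (HG : forall i, is_pogroup (G i)).

Lemma dsum_ext (f g : car (dsum I G HG)) :
  (forall i, proj1_sig f i = proj1_sig g i) -> f = g.
Proof.
  case: f g => [f hf] [g hg] /= e.
  have ee : f = g by apply: functional_extensionality_dep.
  by subst g; f_equal; apply: proof_irrelevance.
Qed.

Lemma dsum_pogroup : is_pogroup (dsum I G HG).
Proof.
  repeat split.
  - by move=> x y z; apply: dsum_ext => i /=; apply: addA.
  - by move=> x y; apply: dsum_ext => i /=; apply: addC.
  - by move=> x; apply: dsum_ext => i /=; apply: add0l.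
  - by move=> x; apply: dsum_ext => i /=; apply: addNl.
  - by move=> x i; apply: le_refl.
  - by move=> x y h1 h2; apply: dsum_ext => i; apply: le_anti.
  - by move=> x y z h1 h2 i; apply: (le_trans _ (proj1_sig y i)).
  - by move=> x y z h i /=; apply: le_add.
Qed.

Lemma decomp_dsum : @DirectDecomp (dsum I G HG) I G (fun f => proj1_sig f).
Proof.
  split => //.
  - exact: dsum_ext.
  - by move=> [f [l hl]]; exists l.
  - by move=> f hf; exists (exist _ f hf).
Qed.

Lemma decomp_qseq m :
  exists phi, @DirectDecomp (qseq (dsum I G HG) m) I (fun i => qseq (G i) m) phi.
Proof.
  elim: m => [|m [phi IH]]; first by exists (fun f => proj1_sig f); apply: decomp_dsum.
  exists (quot_coords phi).
  apply: (@decomp_quot _ (qseq_pogroup _ dsum_pogroup m) _ _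
                       (fun i => qseq_pogroup _ (HG i) m)).
  exact: IH.
Qed.

Lemma qseq_dsum_trivial m :
  trivial (qseq (dsum I G HG) m) <-> forall i, trivial (qseq (G i) m).
Proof.
  have [phi Hd] := decomp_qseq m.
  exact: (@decomp_trivial _ (qseq_pogroup _ dsum_pogroup m) _ _
                          (fun i => qseq_pogroup _ (HG i) m) _ Hd).
Qed.

Lemma qseq_dsum_zero_Qsub m :
  zero_sub _ (@Qsub (qseq (dsum I G HG) m)) <-> forall i, zero_sub _ (@Qsub (qseq (G i) m)).
Proof.
  have [phi Hd] := decomp_qseq m.
  exact: (@decomp_zero_Qsub _ (qseq_pogroup _ dsum_pogroup m) _ _
                            (fun i => qseq_pogroup _ (HG i) m) _ Hd).
Qed.
End DirectSumInstance.

Definition stable_stage (G : poGroup) (m : nat) : Prop :=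
  ~ trivial (qseq G m) /\ zero_sub (qseq G m) (@Qsub (qseq G m)).

Section QuotientByQ.
Context {H : poGroup} {HH : is_pogroup H}.
Local Notation QH := (quot H (@Qsub H)).
Local Notation mk := (qmk H (@Qsub H)).

Lemma trivial_quot : trivial H -> trivial QH.
Proof. by move=> t P; rewrite (qmk_rep Qgen P) (t (qrep _ _ P)). Qed.

Lemma nontrivial_quot : zero_sub H (@Qsub H) -> ~ trivial H -> ~ trivial QH.
Proof.
  move=> z nt t; apply: nt => x.
  have : Qsub (add x (opp zero)) by apply/(qmk_eq Qgen); apply: t.
  by move=> /z; rewrite opp0 add0r.
Qed.

(** If [Q(H) = 0], then [H/Q(H)] is isomorphic to [H], i.e. decomposes as a
    direct sum with a single summand [H]. *)
Lemma decomp_quot_trivial_Q :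
  zero_sub H (@Qsub H) -> @DirectDecomp QH unit (fun _ => H) (fun P _ => qrep H (@Qsub H) P).
Proof.
  move=> z.
  have rep_mk a : qrep H Qsub (mk a) = a by apply: sub_eq0; apply: z; apply: (qrep_qmk Qgen).
  split.
  - by move=> P R _; rewrite [P](qmk_rep Qgen) [R](qmk_rep Qgen) (qadd_mk Qgen) !rep_mk.
  - by move=> P R e; rewrite (qmk_rep Qgen P) (qmk_rep Qgen R) (e tt).
  - by move=> P; exists (tt :: nil) => -[] []; left.
  - by move=> f _; exists (mk (f tt)) => -[]; rewrite rep_mk.
  - move=> P R; rewrite {1}[P](qmk_rep Qgen) {1}[R](qmk_rep Qgen); split.
    + move=> /(qle_mk Qgen) [c [pc hc]] _; have := z _ hc.
      by move=> /sub_eq0 e; apply: pos_le; rewrite e.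
    + by move=> h; apply: qle_mk_intro; apply: (h tt).
Qed.

Lemma zero_Qsub_quot : zero_sub H (@Qsub H) -> zero_sub QH (@Qsub QH).
Proof.
  move=> z; apply: (proj2 (@decomp_zero_Qsub _ Qquot_pogroup _ _ (fun _ => HH) _
                             (decomp_quot_trivial_Q z))).
  by move=> _.
Qed.
End QuotientByQ.

Lemma trivial_qseq_mono (H : poGroup) m k :
  m <= k -> trivial (qseq H m) -> trivial (qseq H k).
Proof. by move=> hk t; elim: hk => [|j _ IH] //=; apply: trivial_quot. Qed.

Lemma stable_stage_mono (H : poGroup) (HH : is_pogroup H) m k :
  m <= k -> stable_stage H m -> stable_stage H k.
Proof.
  move=> hk t; elim: hk => [|j _ [nt z]] //.
  have HHj := qseq_pogroup H HH j.
  by split; [apply: nontrivial_quot | apply: zero_Qsub_quot].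
Qed.

Theorem corollary4p9 (I : Type) (G : I -> poGroup)
  (HG : forall i, is_pogroup (G i)) (n : I -> nat) (N : nat)
  (HN : is_sup n N) :
  ((forall i, n_atomic (G i) (n i)) -> n_atomic (@dsum I G HG) N) /\
  (inhabited I -> (forall i, n_antimatter (G i) (n i)) ->
     n_antimatter (@dsum I G HG) N).
Proof.
  case: HN => n_le_N N_least; split.
  - move=> atomic; split.
    + move=> m hm; apply/qseq_dsum_trivial => i.
      by apply: (proj1 (atomic i)); apply: (Nat.le_trans _ N).
    + move=> k hk; apply: N_least => i; apply: (proj2 (atomic i)) => m hm.
      exact: (proj1 (qseq_dsum_trivial I G HG m) (hk m hm)).
  - move=> [i0] antimatter.
    have stable_N i : stable_stage (G i) N.
    { exact: (stable_stage_mono _ (HG i) (n i) N (n_le_N i) (proj1 (antimatter i))). }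
    split.
    + split; first by move=> /qseq_dsum_trivial t; apply: (proj1 (stable_N i0)).
      by apply/qseq_dsum_zero_Qsub => i; apply: (proj2 (stable_N i)).
    + move=> k [nt z]; apply: N_least => i.
      case: (le_lt_dec (n i) k) => // lt_k; apply: (proj2 (antimatter i)); split.
      * move=> t; apply: (proj1 (proj1 (antimatter i))).
        exact: (trivial_qseq_mono _ k _ (Nat.lt_le_incl _ _ lt_k) t).
      * exact: (proj1 (qseq_dsum_zero_Qsub I G HG k) z).
Qed.
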